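(* Let $x=(x_1,\dots,x_k)$ and $y=(y_1,\dots,y_k)$ be integer sequences of length $k$ such that $S_{i_1,\dots,i_m}(x)=S_{i_1,\dots,i_m}(y)$ for every $m$ with $1\le m\le 6$ and every $i_1,\dots,i_m\in[k]$. Then $y$ is a cyclic shift of $x$, i.e. there is an integer $c$ with $x_j=y_{j+c}$ for all $j\in[k]$ (indices mod $k$).
   Context: Indices are interpreted modulo $k$ and $[k]=\{1,\dots,k\}$. For $i_1,\dots,i_m\in[k]$, the cyclic statistic of order $m$ is $S_{i_1,\dots,i_m}(x)=\sum_{j=1}^{k}x_{i_1+j}x_{i_2+j}\cdots x_{i_m+j}$. *)

From mathcomp Require Import all_boot all_order all_algebra.
Set Implicit Arguments. Unset Strict Implicit. Unset Printing Implicit Defensive.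
Import GRing.Theory Num.Theory.
Local Open Scope ring_scope.

(* Entry of an integer sequence x = (x_1,...,x_k) with (integer) index n
   interpreted modulo k: at_mod x n = x_r where r in [k] and r = n (mod k).
   x_r (1 <= r <= k) is stored at position r-1 of the tuple, so the
   position is ((n - 1) mod k). *)
Definition at_mod (k : nat) (x : k.-tuple int) (n : int) : int :=
  nth 0 x `|((n - 1) %% k%:Z)%Z|%N.

Definition cyc_stat (k m : nat) (i : 'I_m -> nat) (x : k.-tuple int) : int :=
  \sum_(1 <= j < k.+1) \prod_(l < m) at_mod x (i l + j)%N%:Z.

(* Let X(f) = sum_i w^(f i) x_i be the discrete Fourier transform of x, for a
   primitive k-th root of unity w.  Expanding the statistics shows that they
   determine every product X(f_1) ... X(f_m) with m <= 6 and
   f_1 + ... + f_m = 0 (mod k).  Since X(f) is a rational polynomial evaluated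
   at w^f, and w^f, w^f' are conjugate when gcd(f, k) = gcd(f', k), whether
   X(f) vanishes depends only on gcd(f, k); with m = 2 this shows that X and Y
   have the same zeros, and the ratio u = Y/X on the support of X is trivial on
   all zero-sum sequences of length at most 6.  Writing residues as sums of two
   or three units, such a u is, on each gcd class {g a : a a unit mod k/g}, of
   the form u(f) = w^(c_g f); zero sums mixing two classes make the constants
   c_g pairwise compatible, and a Chinese remainder argument glues them into a
   single c with Y(f) = w^(c f) X(f) for every f, which says that y is x
   shifted by c. *)

From mathcomp Require Import all_boot all_order all_algebra all_field.
From mathcomp Require Import ring.
Set Implicit Arguments. Unset Strict Implicit. Unset Printing Implicit Defensive.
Import GRing.Theory.

(** * Sums of units modulo n *)

Definition unit_sum2 (n z : nat) :=
  exists a b, [/\ coprime a n, coprime b n & a + b = z %[mod n]].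

Lemma unit_sum2_pfactor p e z : prime p -> 0 < e -> odd p || ~~ odd z ->
  unit_sum2 (p ^ e) z.
Proof.
move=> p_pr e_gt0 pz; set q := p ^ e.
have p_dvd_q : p %| q by rewrite dvdn_exp.
have p_le_q : p <= q by rewrite dvdn_leq ?expn_gt0 ?prime_gt0.
have [p_odd | p_even] := boolP (odd p).
  (* a is 1 or 2, whichever differs from z modulo p *)
  pose a := (z %% p == 1).+1.
  have a_lt_p : a < p.
    by rewrite /a; case: (_ == 1); rewrite ?(leq_ltn_trans _ (odd_prime_gt2 p_odd p_pr)).
  have a_le_zq : a <= z + q.
    by rewrite (leq_trans (ltnW a_lt_p)) // (leq_trans p_le_q) // leq_addl.
  exists a, (z + q - a); rewrite !coprime_pexpr //; split.
  - by rewrite /a; case: (_ == 1); rewrite ?coprime1n ?coprime2n.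
  - rewrite coprime_sym prime_coprime //; apply/negP => p_dvd_b.
    have : z %% p = a.
      rewrite -(modn_small a_lt_p) -[a in RHS]add0n -(eqP p_dvd_b) modnDml subnK //.
      by rewrite -modnDmr (eqP p_dvd_q) addn0.
    by rewrite /a; case: eqP => [-> | /[swap] <-].
  - by rewrite subnKC // modnDr.
have z_even : ~~ odd z by rewrite (negbTE p_even) in pz.
have p2 : p = 2 by case/even_prime: p_pr => // p_odd; rewrite p_odd in p_even.
have zq_gt0 : 0 < z + q by rewrite addn_gt0 (leq_trans (prime_gt0 p_pr) p_le_q) orbT.
exists 1, (z + q).-1; rewrite !coprime_pexpr // p2 coprime1n coprimen2; split => //.
  have q_even : ~~ odd q by rewrite oddX p2 /= orbF -lt0n.
  by rewrite -subn1 oddB // oddD (negbTE z_even) (negbTE q_even).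
by rewrite add1n prednK // modnDr.
Qed.

Lemma unit_sum2_mul m1 m2 z : coprime m1 m2 ->
  unit_sum2 m1 z -> unit_sum2 m2 z -> unit_sum2 (m1 * m2) z.
Proof.
move=> co12 [a1 [b1 [ca1 cb1 e1]]] [a2 [b2 [ca2 cb2 e2]]].
have coprime_chinese r1 r2 : coprime r1 m1 -> coprime r2 m2 ->
    coprime (chinese m1 m2 r1 r2) (m1 * m2).
  move=> c1 c2; rewrite coprimeMr -coprime_modl (chinese_modl co12) coprime_modl c1.
  by rewrite -coprime_modl (chinese_modr co12) coprime_modl.
exists (chinese m1 m2 a1 a2), (chinese m1 m2 b1 b2); split; rewrite ?coprime_chinese //.
apply/eqP; rewrite (chinese_remainder co12); apply/andP; split; apply/eqP.
  by rewrite -modnDm !(chinese_modl co12) modnDm.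
by rewrite -modnDm !(chinese_modr co12) modnDm.
Qed.

Lemma unit_sum2_parity n z : 0 < n -> odd n || ~~ odd z -> unit_sum2 n z.
Proof.
elim/ltn_ind: n => n IHn n_gt0 nz.
have [n_le1 | n_gt1] := leqP n 1.
  by exists 0, 0; rewrite (@anti_leq n 1) ?n_le1 // !modn1.
have p_pr := pdiv_prime n_gt1; set p := pdiv n in p_pr *.
have e_gt0 : 0 < logn p n by rewrite logn_gt0 mem_primes p_pr n_gt0 pdiv_dvd.
have [m co_pm def_n] := pfactor_coprime p_pr n_gt0.
move: (logn p n) e_gt0 def_n => e e_gt0 def_n; clearbody p; subst n.
have m_gt0 : 0 < m by move: n_gt0; rewrite muln_gt0 => /andP[].
move: nz; rewrite oddM oddX => nz; apply: unit_sum2_mul.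
- by rewrite coprime_sym coprime_pexpl.
- apply: IHn => //; last by case/orP: nz => [/andP[-> _] | ->]; rewrite ?orbT.
  by rewrite -{1}(muln1 m) ltn_pmul2l // -(expn0 p) ltn_exp2l ?prime_gt1.
- apply: unit_sum2_pfactor => //.
  by case/orP: nz => [/andP[_ /orP[/eqP e0|->]]|->]; rewrite ?orbT //; rewrite e0 in e_gt0.
Qed.

Lemma unit_sum23 n z : 0 < n -> exists s : seq nat,
  [/\ all (coprime^~ n) s, 1 < size s < 4 & sumn s = z %[mod n]].
Proof.
move=> n_gt0; have [nz | ] := boolP (odd n || ~~ odd z).
  have [a [b [ca cb e]]] := unit_sum2_parity n_gt0 nz.
  by exists [:: a; b]; rewrite /= ca cb addn0.
case: z => [|z] /=; first by rewrite orbT.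
rewrite negbK => /norP[_ z_even]; have nz : odd n || ~~ odd z by rewrite z_even orbT.
have [a [b [ca cb e]]] := unit_sum2_parity n_gt0 nz.
exists [:: 1; a; b]; rewrite /= ca cb coprime1n addn0; split => //.
by rewrite add1n -addn1 -modnDml e modnDml addn1.
Qed.

Definition opp_mod (n a : nat) := n - a %% n.

Lemma dvdn_opp_mod n a : 0 < n -> n %| a + opp_mod n a.
Proof.
move=> n_gt0; rewrite /opp_mod {1}(divn_eq a n) -addnA subnKC ?dvdn_add ?dvdn_mull //.
exact/ltnW/ltn_pmod.
Qed.

Lemma gcdn_opp_mod n a : 0 < n -> gcdn (opp_mod n a) n = gcdn a n.
Proof.
move=> n_gt0; rewrite /opp_mod -[RHS]gcdn_modl.
move: (a %% n) (ltnW (ltn_pmod a n_gt0)) => r /subnKC.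
by move: (n - r) => t <-; rewrite gcdnDr gcdnDl gcdnC.
Qed.

Lemma dvdn_add_opp_mod n a b : 0 < n -> (n %| a + opp_mod n b) = (a == b %[mod n]).
Proof.
move=> n_gt0; rewrite /dvdn -(eqn_modDr (opp_mod n b)).
by rewrite (eqP (dvdn_opp_mod b n_gt0)).
Qed.

Lemma sumn_map_muln g (s : seq nat) : sumn (map (muln g) s) = g * sumn s.
Proof. by elim: s => [|a s IHs] /=; rewrite ?muln0 // IHs mulnDr. Qed.

Lemma gcdn_mul_coprime g a k : g %| k -> coprime a (k %/ g) -> gcdn (g * a) k = g.
Proof.
by move=> g_dvd ca; rewrite -(divnK g_dvd) (mulnC _ g) -muln_gcdr (eqP ca) muln1.
Qed.

Lemma eqn_mod_mull g k z y : g %| k -> z = y %[mod k %/ g] -> g * z = g * y %[mod k].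
Proof. by move=> g_dvd e; rewrite -(divnK g_dvd) (mulnC _ g) -!muln_modr e. Qed.

Lemma unit_sum23_mull g k z : 0 < k -> g %| k -> exists s : seq nat,
  [/\ all (coprime^~ (k %/ g)) s, 1 < size s < 4 & g * sumn s = g * z %[mod k]].
Proof.
move=> k_gt0 g_dvd; have [|s [s_units s_size s_sum]] := unit_sum23 z (n := k %/ g).
  by rewrite divn_gt0 ?(dvdn_gt0 k_gt0) // dvdn_leq.
by exists s; split => //; exact: eqn_mod_mull.
Qed.

Lemma eqn_mod_lcm a b m1 m2 :
  a = b %[mod m1] -> a = b %[mod m2] -> a = b %[mod lcmn m1 m2].
Proof.
wlog ba : a b / b <= a => [W e1 e2|/eqP e1 /eqP e2].
  have [ba | /ltnW ab] := leqP b a; first exact: W.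
  by symmetry; apply: W; symmetry.
by apply/eqP; move: e1 e2; rewrite !eqn_mod_dvd // dvdn_lcm => -> ->.
Qed.

Lemma chinese_gcd m1 m2 a b : 0 < m1 -> a = b %[mod gcdn m1 m2] ->
  exists c, c = a %[mod m1] /\ c = b %[mod m2].
Proof.
move=> m1_gt0 ab; set d := gcdn m1 m2 in ab.
have [km kn def_km _] := egcdnP m2 m1_gt0.
(* [m1.-1 * kn * m2] is d modulo m1 and 0 modulo m2, [km * m1] the other way round. *)
have e1_mod : m1.-1 * kn * m2 = d %[mod m1].
  rewrite -(modnMDl km) -[in RHS](modnMDl (kn * m2)) def_km /d; congr (_ %% _).
  by rewrite -[in RHS](prednK m1_gt0) mulnS prednK //; ring.
have e2_mod : km * m1 = d %[mod m2] by rewrite def_km modnMDl.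
exists (a %% d + a %/ d * (m1.-1 * kn * m2) + b %/ d * km * m1); split.
  rewrite addnC modnMDl -modnDmr -modnMmr e1_mod modnMmr modnDmr addnC -divn_eq //.
have -> : a %% d + a %/ d * (m1.-1 * kn * m2) + b %/ d * km * m1
          = a %/ d * m1.-1 * kn * m2 + (b %% d + b %/ d * (km * m1)).
  by rewrite ab; ring.
by rewrite modnMDl -modnDmr -modnMmr e2_mod modnMmr modnDmr addnC -divn_eq.
Qed.

Lemma eqn_mod_biglcm (I : eqType) (r : seq I) (m : I -> nat) a b :
  (forall i, i \in r -> a = b %[mod m i]) -> a = b %[mod \big[lcmn/1]_(i <- r) m i].
Proof.
move=> ab; rewrite big_seq; apply: (big_ind (fun d => a = b %[mod d])) => //.
  by rewrite !modn1.
exact: eqn_mod_lcm.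
Qed.

Lemma gcdn_biglcmr (I : Type) (r : seq I) (m : I -> nat) n :
  gcdn n (\big[lcmn/1]_(i <- r) m i) = \big[lcmn/1]_(i <- r) gcdn n (m i).
Proof.
have gcdn_lcmr : {morph gcdn n : x y / lcmn x y}.
  by move=> x y; rewrite !(gcdnC n) Order.NatDvd.meetUl.
exact: (big_morph _ gcdn_lcmr (gcdn1 n)).
Qed.

Lemma chinese_seq (I : eqType) (r : seq I) (m : I -> nat) (P : I -> nat -> Prop) :
    (forall i, i \in r -> 0 < m i) ->
    (forall i c c', i \in r -> c = c' %[mod m i] -> P i c -> P i c') ->
    (forall i, i \in r -> exists c, P i c) ->
    (forall i j c c', i \in r -> j \in r -> P i c -> P j c' ->
       c = c' %[mod gcdn (m i) (m j)]) ->
  exists c, forall i, i \in r -> P i c.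
Proof.
elim: r => [|i r IHr] m_gt0 Pmod Pex Pcompat; first by exists 0.
have [ci Pci] := Pex i (mem_head i r).
have [c' Pc'] : exists c', forall j, j \in r -> P j c'.
  apply: IHr => [j jr | j c c' jr | j jr | j l c c' jr lr].
  - by apply: m_gt0; rewrite inE jr orbT.
  - by apply: Pmod; rewrite inE jr orbT.
  - by apply: Pex; rewrite inE jr orbT.
  - by apply: Pcompat; rewrite inE ?jr ?lr orbT.
set M := \big[lcmn/1]_(j <- r) m j.
have [c [c_ci c_c']] : exists c, c = ci %[mod m i] /\ c = c' %[mod M].
  apply: chinese_gcd; first exact/m_gt0/mem_head.
  rewrite gcdn_biglcmr; apply: eqn_mod_biglcm => j jr.
  by apply: Pcompat (Pci) (Pc' j jr); rewrite inE ?jr ?eqxx ?orbT.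
exists c => j; rewrite inE => /predU1P[-> | jr].
  by apply: Pmod (esym c_ci) Pci; exact: mem_head.
have mj_M : m j %| M by rewrite /M (big_rem j jr) /= dvdn_lcml.
apply: Pmod (Pc' j jr); first by rewrite inE jr orbT.
by rewrite -(modn_dvdm c' mj_M) -c_c' modn_dvdm.
Qed.

Local Open Scope ring_scope.

(** * Characters trivial on short zero sums *)

Definition zero_sum_trivial (F : pzRingType) (n : nat) (S : pred nat) (u : nat -> F) :=
  forall s : seq nat, all S s -> (0 < size s <= 6)%N -> (n %| sumn s)%N ->
    \prod_(a <- s) u a = 1.

Section UnitCharacter.

Variables (F : fieldType) (n : nat) (v : nat -> F).
Hypotheses (n_gt0 : (0 < n)%N) (v_triv : zero_sum_trivial n (coprime^~ n) v).

Lemma zero_sum_trivial_pair a b : coprime a n -> coprime b n -> (n %| a + b)%N ->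
  v a * v b = 1.
Proof.
move=> ca cb n_dvd; transitivity (\prod_(i <- [:: a; b]) v i).
  by rewrite big_cons big_seq1.
by apply: v_triv => //=; rewrite ?ca ?cb ?addn0.
Qed.

Lemma zero_sum_trivial_eq (s t : seq nat) :
    all (coprime^~ n) s -> all (coprime^~ n) t -> (0 < size s + size t <= 6)%N ->
    (sumn s = sumn t %[mod n])%N ->
  \prod_(a <- s) v a = \prod_(a <- t) v a.
Proof.
move=> s_units t_units st_size st_sum; pose t' := map (opp_mod n) t.
have opp_unit a : coprime a n -> coprime (opp_mod n a) n.
  by rewrite /coprime gcdn_opp_mod.
have tt'_sum : (n %| sumn t + sumn t')%N.
  by rewrite /t'; elim: (t) => //= a r IHr; rewrite addnACA dvdn_add ?dvdn_opp_mod.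
have st'_one : \prod_(a <- s ++ t') v a = 1.
  apply: v_triv; rewrite ?size_cat ?size_map //.
    by rewrite all_cat s_units all_map; apply: sub_all t_units => a /opp_unit.
  by rewrite sumn_cat /dvdn -modnDml st_sum modnDml.
have tt'_one : \prod_(a <- t) v a * \prod_(a <- t') v a = 1.
  rewrite big_map -big_split big_seq big1 // => a /(allP t_units) ca /=.
  by rewrite zero_sum_trivial_pair ?opp_unit ?dvdn_opp_mod.
transitivity (\prod_(a <- s) v a * (\prod_(a <- t) v a * \prod_(a <- t') v a)).
  by rewrite tt'_one mulr1.
by rewrite mulrCA -big_cat st'_one mulr1.
Qed.

(* v a * v b only depends on a + b modulo n; induct on j, comparing with two
   units plus 2 - odd n copies of 1 (at most 6 terms in all).  For even n the
   step is 2 because units are odd, so two of them only reach even residues. *)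
Lemma zero_sum_trivial_pair_expr j a b : coprime a n -> coprime b n ->
    (a + b = j * (2 - odd n) %[mod n])%N ->
  v a * v b = v 1%N ^+ (j * (2 - odd n)).
Proof.
set s := (2 - odd n)%N; elim: j a b => [|j IHj] a b ca cb ab.
  by rewrite mul0n expr0 zero_sum_trivial_pair // /dvdn ab mul0n mod0n.
have [a' [b' [ca' cb' ab']]] : unit_sum2 n (j * s).
  by apply: unit_sum2_parity; rewrite /s; case: (odd n); rewrite //= oddM andbF.
transitivity (\prod_(i <- [:: a; b]) v i); first by rewrite big_cons big_seq1.
rewrite (zero_sum_trivial_eq (t := a' :: b' :: nseq s 1%N)) /=.
- by rewrite !big_cons big_nseq iter_mulr_1 mulrA IHj // -exprD mulSn addnC.
- by rewrite ca cb.
- by rewrite ca' cb' all_nseq coprime1n orbT.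
- by rewrite size_nseq /s; case: (odd n).
by rewrite addn0 sumn_nseq mul1n addnA -[RHS]modnDml ab' modnDml ab mulSn addnC.
Qed.

Lemma zero_sum_trivial_units :
  v 1%N ^+ n = 1 /\ forall a, coprime a n -> v a = v 1%N ^+ a.
Proof.
have pair_expr z a b : odd n || ~~ odd z -> coprime a n -> coprime b n ->
    (a + b = z %[mod n])%N -> v a * v b = v 1%N ^+ z.
  move=> nz; have [j ->] : exists j, z = (j * (2 - odd n))%N.
    case: (odd n) nz => /= [_ | z_even]; first by exists z; rewrite muln1.
    by exists z./2; rewrite muln2 halfK (negbTE z_even) subn0.
  exact: zero_sum_trivial_pair_expr.
have v1_inv : v 1%N * v n.-1 = 1.
  by rewrite zero_sum_trivial_pair ?coprime1n ?coprimePn // add1n prednK.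
have v1_n : v 1%N ^+ n = 1.
  by rewrite -v1_inv -(pair_expr n 1%N n.-1) ?orbN ?coprime1n ?coprimePn // add1n prednK.
split=> // a ca; apply: (mulIf (x := v 1%N)).
  by apply/eqP => v1_0; move/eqP: v1_inv; rewrite v1_0 mul0r eq_sym oner_eq0.
rewrite -exprSr -(pair_expr a.+1 a 1%N) ?coprime1n ?addn1 //.
by case: (boolP (odd n)) => //= n_even; rewrite negbK -coprimen2 (coprime_dvdr _ ca) ?dvdn2.
Qed.

End UnitCharacter.

Section GcdClasses.

Variables (F : fieldType) (k : nat) (w : F) (S : pred nat) (u : nat -> F).
Hypotheses (k_gt0 : (0 < k)%N) (w_prim : k.-primitive_root w).
Hypothesis S_gcd : forall f f', gcdn f k = gcdn f' k -> S f -> S f'.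
Hypothesis u_triv : zero_sum_trivial k S u.

Definition class_expr (g c : nat) := forall f, gcdn f k = g -> u f = w ^+ (c * f).

Lemma S_mul_coprime g a : (g %| k)%N -> S g -> coprime a (k %/ g) -> S (g * a).
Proof.
by move=> g_dvd Sg ca; apply: S_gcd Sg; rewrite gcdn_mul_coprime ?(gcdn_idPl g_dvd).
Qed.

Lemma class_expr_exists g : (g %| k)%N -> S g -> exists c, class_expr g c.
Proof.
move=> g_dvd Sg; have g_gt0 := dvdn_gt0 k_gt0 g_dvd.
set n := (k %/ g)%N; have def_k : k = (n * g)%N by rewrite divnK.
have n_gt0 : (0 < n)%N by move: k_gt0; rewrite def_k muln_gt0 => /andP[].
pose v a := u (g * a)%N.
have v_triv : zero_sum_trivial n (coprime^~ n) v.
  move=> s s_units s_size n_dvd; rewrite -(big_map (muln g) xpredT u).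
  apply: u_triv; rewrite ?size_map ?sumn_map_muln //.
    by rewrite all_map; apply: sub_all s_units => a; exact: S_mul_coprime.
  by rewrite def_k mulnC dvdn_pmul2l.
have [v1_n v_expr] := zero_sum_trivial_units n_gt0 v_triv.
have wg_prim : n.-primitive_root (w ^+ g).
  have := dvdn_prim_root w_prim (m := n); rewrite {1 2}def_k mulKn ?dvdn_mulr //.
  by apply.
have [i v1_w] := prim_rootP wg_prim v1_n.
exists i => f gf; have g_dvd_f : (g %| f)%N by rewrite -gf dvdn_gcdl.
have ca : coprime (f %/ g) n.
  rewrite /coprime -(eqn_pmul2l g_gt0) muln_gcdr muln1 [(g * (f %/ g))%N]mulnC divnK //.
  by rewrite [(g * n)%N]mulnC -def_k gf.
rewrite -(divnK g_dvd_f) mulnC -/(v _) v_expr // v1_w -!exprM; congr (w ^+ _); ring.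
Qed.

Lemma class_expr_mod g c c' : (g %| k)%N -> (c = c' %[mod k %/ g])%N ->
  class_expr g c -> class_expr g c'.
Proof.
move=> g_dvd cc' Pc f gf; have g_dvd_f : (g %| f)%N by rewrite -gf dvdn_gcdl.
rewrite Pc //; apply/eqP; rewrite (eq_prim_root_expr w_prim) -(divnK g_dvd_f).
rewrite !mulnA (mulnC _ g) (mulnC _ g); apply/eqP/eqn_mod_mull => //.
by rewrite -modnMml cc' modnMml.
Qed.

Lemma prod_class_expr g c s : (g %| k)%N -> all (coprime^~ (k %/ g)%N) s ->
  class_expr g c -> \prod_(f <- map (muln g) s) u f = w ^+ (g * sumn s) ^+ c.
Proof.
move=> g_dvd + Pc; elim: s => [|a s IHs] /=; first by rewrite big_nil muln0 expr1n.
case/andP=> ca s_units; rewrite big_cons IHs // Pc ?gcdn_mul_coprime //.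
by rewrite -!exprM -exprD mulnDr mulnDl !(mulnC c).
Qed.

(* With d = gcd(k/g1, k/g2), test the constants on a zero sum made of at most
   three elements of class g1 adding up to k/d and at most three of class g2
   adding up to -k/d modulo k; w^(k/d) is a primitive d-th root of unity. *)
Lemma class_expr_compat g1 g2 c1 c2 : (g1 %| k)%N -> (g2 %| k)%N -> S g1 -> S g2 ->
  class_expr g1 c1 -> class_expr g2 c2 -> (c1 = c2 %[mod gcdn (k %/ g1) (k %/ g2)])%N.
Proof.
move=> g1_dvd g2_dvd Sg1 Sg2 Pc1 Pc2.
set n1 := (k %/ g1)%N; set n2 := (k %/ g2)%N; set d := gcdn n1 n2.
have d_dvd_k : (d %| k)%N by rewrite (dvdn_trans (dvdn_gcdl _ _)) ?dvdn_div.
set K := (k %/ d)%N; have K_le_k : (K <= k)%N by rewrite leq_div.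
have def_K1 : (g1 * (n1 %/ d))%N = K by rewrite muln_divA ?dvdn_gcdl // mulnC divnK.
have def_K2 : (g2 * (n2 - n2 %/ d))%N = (k - K)%N.
  by rewrite mulnBr muln_divA ?dvdn_gcdr // mulnC divnK.
have [s1 [s1_units s1_size s1_sum]] := unit_sum23_mull (n1 %/ d) k_gt0 g1_dvd.
have [s2 [s2_units s2_size s2_sum]] := unit_sum23_mull (n2 - n2 %/ d) k_gt0 g2_dvd.
rewrite def_K1 in s1_sum; rewrite def_K2 in s2_sum.
have s_one : \prod_(f <- map (muln g1) s1 ++ map (muln g2) s2) u f = 1.
  apply: u_triv.
  - rewrite all_cat !all_map; apply/andP; split.
      by apply: sub_all s1_units => a; exact: S_mul_coprime.
    by apply: sub_all s2_units => a; exact: S_mul_coprime.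
  - case/andP: s1_size => /ltnW s1_gt0 s1_le3; case/andP: s2_size => _ s2_le3.
    rewrite size_cat !size_map addn_gt0 s1_gt0.
    exact: (leq_add (s1_le3 : size s1 <= 3)%N (s2_le3 : size s2 <= 3)%N).
  by rewrite sumn_cat !sumn_map_muln /dvdn -modnDm s1_sum s2_sum modnDm subnKC ?modnn.
rewrite big_cat /= (prod_class_expr g1_dvd s1_units Pc1) in s_one.
rewrite (prod_class_expr g2_dvd s2_units Pc2) in s_one.
rewrite -(prim_expr_mod w_prim (g1 * _)%N) s1_sum prim_expr_mod // in s_one.
rewrite -(prim_expr_mod w_prim (g2 * _)%N) s2_sum prim_expr_mod // in s_one.
have wK_inv : w ^+ K * w ^+ (k - K) = 1 by rewrite -exprD subnKC // prim_expr_order.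
apply/eqP; rewrite -(eq_prim_root_expr (dvdn_prim_root w_prim d_dvd_k)); apply/eqP.
by rewrite -[LHS]mulr1 -(expr1n _ c2) -wK_inv exprMn mulrCA s_one mulr1.
Qed.

Theorem zero_sum_trivial_expr : exists c, forall f, S f -> u f = w ^+ (c * f).
Proof.
pose r := [seq g <- divisors k | S g].
have r_dvd g : g \in r -> (g %| k)%N /\ S g.
  by rewrite mem_filter -dvdn_divisors // => /andP[].
have [c Pc] : exists c, forall g, g \in r -> class_expr g c.
  apply: (chinese_seq (m := fun g => k %/ g)%N).
  - move=> g /r_dvd[g_dvd _]; rewrite divn_gt0 ?(dvdn_gt0 k_gt0) //.
    exact: dvdn_leq.
  - by move=> g c c' /r_dvd[g_dvd _]; exact: class_expr_mod.
  - by move=> g /r_dvd[]; exact: class_expr_exists.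
  - by move=> g1 g2 c1 c2 /r_dvd[? ?] /r_dvd[? ?]; exact: class_expr_compat.
exists c => f Sf; apply: (Pc (gcdn f k)) => //.
rewrite mem_filter -dvdn_divisors // dvdn_gcdr andbT; apply: S_gcd Sf.
by rewrite (gcdn_idPl (dvdn_gcdr f k)).
Qed.

End GcdClasses.

(** * The discrete Fourier transform *)

Definition same_cyc_stats (k : nat) (x y : k.-tuple int) :=
  forall (m : nat) (i : 'I_m -> nat), (1 <= m <= 6)%N ->
    (forall l, (1 <= i l <= k)%N) -> cyc_stat i x = cyc_stat i y.

Definition at_modC (k : nat) (x : k.-tuple int) (i : nat) : algC := (at_mod x i%:Z)%:~R.

Lemma at_modC_mod (k : nat) (x : k.-tuple int) i : at_modC x (i %% k) = at_modC x i.
Proof. by rewrite /at_modC /at_mod -modz_nat modzDml. Qed.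

Section Fourier.

Variables (k : nat) (w : algC).
Hypotheses (k_gt0 : (0 < k)%N) (w_prim : k.-primitive_root w).

(* Indices are read modulo k as in [at_mod], so the term i = 0 is x_k. *)
Definition dft (x : k.-tuple int) (f : nat) := \sum_(i < k) w ^+ (f * i) * at_modC x i.

Lemma dft_shift x f s :
  (\sum_(i < k) w ^+ (f * i) * at_modC x (i + s)) * w ^+ (f * s) = dft x f.
Proof.
rewrite mulr_suml; pose sh (i : 'I_k) : 'I_k := Ordinal (ltn_pmod (i + s) k_gt0).
have sh_inj : injective sh.
  move=> i j /(congr1 val) /= /eqP; rewrite eqn_modDr !modn_small // => /eqP.
  exact: val_inj.
rewrite /dft [RHS](reindex_inj sh_inj) /=; apply: eq_bigr => i _.
rewrite at_modC_mod mulrAC -exprD -mulnDr; congr (_ * _).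
by rewrite -[RHS](prim_expr_mod w_prim) modnMmr (prim_expr_mod w_prim).
Qed.

Lemma prod_dft_shift x m (F : 'I_m -> nat) j : (k %| \sum_(l < m) F l)%N ->
  \prod_(l < m) dft x (F l) = \prod_(l < m) \sum_(i < k) w ^+ (F l * i) * at_modC x (i + j).
Proof.
move=> k_dvd; have wF_one : \prod_(l < m) w ^+ (F l * j) = 1.
  rewrite prodrXr -big_distrl /= mulnC -(prim_expr_mod w_prim) -modnMmr.
  by rewrite (eqP k_dvd) muln0 mod0n expr0.
transitivity (\prod_(l < m) (\sum_(i < k) w ^+ (F l * i) * at_modC x (i + j))
               * \prod_(l < m) w ^+ (F l * j)); last by rewrite wF_one mulr1.
by rewrite -big_split; apply: eq_bigr => l _ /=; rewrite dft_shift.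
Qed.

Lemma cyc_stat_dft x m (F : 'I_m -> nat) : (k %| \sum_(l < m) F l)%N ->
  \sum_(phi : {ffun 'I_m -> 'I_k})
     (\prod_(l < m) w ^+ (F l * phi l)) * (cyc_stat (fun l => (phi l).+1) x)%:~R
  = k%:R * \prod_(l < m) dft x (F l).
Proof.
move=> k_dvd; under eq_bigr => phi _ do rewrite /cyc_stat rmorph_sum mulr_sumr.
rewrite exchange_big /=.
transitivity (\sum_(1 <= j < k.+1) \prod_(l < m) dft x (F l)); last first.
  by rewrite sumr_const_nat subn1 mulr_natl.
apply: eq_bigr => j _; rewrite (prod_dft_shift x j.+1 k_dvd) bigA_distr_bigA /=.
apply: eq_bigr => phi _; rewrite rmorph_prod -big_split /=.
by apply: eq_bigr => l _; rewrite /at_modC addSnnS.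
Qed.

Lemma prod_dft_eq x y : same_cyc_stats x y ->
  forall s : seq nat, (0 < size s <= 6)%N -> (k %| sumn s)%N ->
  \prod_(f <- s) dft x f = \prod_(f <- s) dft y f.
Proof.
move=> xy s s_size k_dvd; pose F (l : 'I_(size s)) := nth 0%N s l.
have k_dvdF : (k %| \sum_(l < size s) F l)%N.
  by move: k_dvd; rewrite sumnE (big_nth 0%N) big_mkord.
rewrite (big_nth 0%N) [RHS](big_nth 0%N) !big_mkord.
apply: (mulfI (prim_root_natf_neq0 w_prim)); rewrite -!cyc_stat_dft //.
by apply: eq_bigr => phi _; rewrite xy // => l; rewrite ltn_ord.
Qed.

Lemma dft_eq0_gcd x f f' : gcdn f k = gcdn f' k -> dft x f = 0 -> dft x f' = 0.
Proof.
move=> ff'; pose q : {poly rat} := \sum_(i < k) ((at_mod x i%:Z)%:~R)%:P * 'X^i.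
have dft_q e : dft x e = (map_poly ratr q).[w ^+ e].
  rewrite /q rmorph_sum horner_sum; apply: eq_bigr => i _.
  by rewrite rmorphM /= map_polyC map_polyXn hornerCM hornerXn /= ratr_int exprM mulrC.
have wf_prim := exp_prim_root w_prim f; have wf'_prim := exp_prim_root w_prim f'.
rewrite ff' in wf_prim.
have [p [def_p _] p_root] := minCpolyP (w ^+ f).
have [p' [def_p' _] p'_root] := minCpolyP (w ^+ f').
have pp' : p = p'.
  apply: (map_poly_inj (@ratr algC)); rewrite -def_p -def_p'.
  rewrite (minCpoly_cyclotomic wf_prim) (minCpoly_cyclotomic wf'_prim).
  by rewrite -(Cintr_Cyclotomic wf_prim) -(Cintr_Cyclotomic wf'_prim).
rewrite !dft_q => /eqP q_root; apply/eqP.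
by move: (p_root q) (p'_root q); rewrite /root q_root pp' => <- ->.
Qed.

Lemma sum_expr_prim e :
  \sum_(f < k) w ^+ (f * e) = if (k %| e)%N then k%:R else 0.
Proof.
under eq_bigr => f _ do rewrite mulnC exprM.
have [k_dvd | k_ndvd] := ifP.
  have -> : w ^+ e = 1 by apply/eqP; rewrite -(prim_order_dvd w_prim).
  by rewrite (eq_bigr (fun _ => 1)) ?sumr_const ?card_ord // => i _; rewrite expr1n.
have we_neq1 : w ^+ e != 1 by rewrite -(prim_order_dvd w_prim) k_ndvd.
have : (w ^+ e - 1) * \sum_(f < k) (w ^+ e) ^+ f = 0.
  by rewrite -subrX1 -exprM mulnC exprM (prim_expr_order w_prim) expr1n subrr.
by move/eqP; rewrite mulf_eq0 subr_eq0 (negbTE we_neq1) => /eqP.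
Qed.

Lemma dft_inj0 (a : nat -> algC) :
    (forall f, (f < k)%N -> \sum_(i < k) w ^+ (f * i) * a i = 0) ->
  forall j, (j < k)%N -> a j = 0.
Proof.
move=> a_dft0 j j_lt_k.
have inv : \sum_(f < k) w ^+ (f * opp_mod k j) * (\sum_(i < k) w ^+ (f * i) * a i)
           = k%:R * a j.
  under eq_bigr => f _ do rewrite mulr_sumr.
  rewrite exchange_big /=.
  transitivity (\sum_(i < k) (\sum_(f < k) w ^+ (f * (i + opp_mod k j))) * a i).
    apply: eq_bigr => i _; rewrite mulr_suml; apply: eq_bigr => f _.
    by rewrite mulrA -exprD -mulnDr addnC.
  under eq_bigr => i _ do rewrite sum_expr_prim dvdn_add_opp_mod // !modn_small ?ltn_ord //.
  rewrite (bigD1 (Ordinal j_lt_k)) //= eqxx big1 ?addr0 // => i i_neq_j.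
  by rewrite ifN ?mul0r //; apply: contra i_neq_j => /eqP ij; apply/eqP/val_inj.
apply/eqP; rewrite -(mulrI_eq0 _ (mulfI (prim_root_natf_neq0 w_prim))) -inv.
by rewrite big1 // => f _; rewrite a_dft0 ?mulr0.
Qed.

Lemma dft_shift_inv x y c : (forall f, dft y f = w ^+ (c * f) * dft x f) ->
  forall j, at_modC y (j + c) = at_modC x j.
Proof.
move=> yx j; pose d i := at_modC y (i + c) - at_modC x i.
suff /eqP : d (j %% k)%N = 0 by rewrite subr_eq0 -at_modC_mod modnDml !at_modC_mod => /eqP.
apply: dft_inj0 (ltn_pmod j k_gt0) => f f_lt_k.
have wfc_neq0 : w ^+ (f * c) != 0 by rewrite expf_neq0 // (prim_root_eq0 w_prim) -lt0n.
apply: (mulIf wfc_neq0); rewrite mul0r /d.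
under eq_bigr => i _ do rewrite mulrBr.
by rewrite sumrB mulrBl dft_shift -/(dft x f) yx mulnC mulrC subrr.
Qed.

Section SameStats.

Variables x y : k.-tuple int.
Hypothesis xy : same_cyc_stats x y.

Lemma dft_eq0_same f : (dft x f == 0) = (dft y f == 0).
Proof.
have pair_eq : dft x f * dft x (opp_mod k f) = dft y f * dft y (opp_mod k f).
  have := prod_dft_eq xy (s := [:: f; opp_mod k f]).
  by rewrite !big_cons !big_nil !mulr1; apply=> //=; rewrite addn0 dvdn_opp_mod.
have opp_gcd : gcdn (opp_mod k f) k = gcdn f k by rewrite gcdn_opp_mod.
have zero_transfer (a b : k.-tuple int) :
    dft a f * dft a (opp_mod k f) = dft b f * dft b (opp_mod k f) ->
    dft a f = 0 -> dft b f = 0.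
  move=> ab a0; move/esym/eqP: ab; rewrite a0 mul0r mulf_eq0.
  by case/orP=> /eqP // /(dft_eq0_gcd opp_gcd).
by apply/eqP/eqP; apply: zero_transfer.
Qed.

Lemma dft_ratio_trivial :
  zero_sum_trivial k (fun f => dft x f != 0) (fun f => dft y f / dft x f).
Proof.
move=> s s_supp s_size k_dvd; rewrite big_split /= prodfV.
by rewrite -(prod_dft_eq xy s_size k_dvd) divff // prodf_seq_neq0.
Qed.

Lemma dft_expr : exists c, forall f, dft y f = w ^+ (c * f) * dft x f.
Proof.
have supp_gcd f f' : gcdn f k = gcdn f' k -> dft x f != 0 -> dft x f' != 0.
  by move=> ff'; apply: contra => /eqP /(dft_eq0_gcd (esym ff')) ->.
have [c ratio_expr] := zero_sum_trivial_expr k_gt0 w_prim supp_gcd dft_ratio_trivial.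
exists c => f; have [x0 | x_neq0] := eqVneq (dft x f) 0.
  by rewrite x0 mulr0; apply/eqP; rewrite -dft_eq0_same x0.
by rewrite -ratio_expr // divfK.
Qed.

End SameStats.

End Fourier.

Theorem lemma3p11 (k : nat) (x y : k.-tuple int) :
  (forall (m : nat) (i : 'I_m -> nat), (1 <= m <= 6)%N ->
     (forall l, (1 <= i l <= k)%N) ->
     cyc_stat i x = cyc_stat i y) ->
  exists c : int, forall j : nat, (1 <= j <= k)%N ->
     at_mod x j%:Z = at_mod y (j%:Z + c).
Proof.
move=> xy; have [k0 | k_gt0] := posnP k.
  exists 0 => j /andP[j_gt0 j_le_k].
  by rewrite k0 leqNgt j_gt0 in j_le_k.
have [w w_prim] := C_prim_root_exists k_gt0.
have [c yx] := dft_expr k_gt0 w_prim xy.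
exists c%:Z => j _; apply: (@intr_inj algC).
by have := dft_shift_inv k_gt0 w_prim yx j; rewrite /at_modC PoszD => ->.
Qed.
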